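(* Let $\mathcal{C}>2$ be a constant. Let $\mathcal{T}$ be a binary decision tree with $t$ internal nodes, and hence $t+1$ leaves, forming the set $\mathcal{L}$. Inputs $x$ are drawn from a fixed distribution, and each $x$ carries a label in $\{1,\dots,k\}$. For each leaf $l$, let $w_l$ be the probability that $x$ reaches $l$, so that $\sum_{l}w_l=1$. Let $\pi_{l,i}$ be the probability that $x$ has label $i$ given that it reaches $l$. Let $w=\max_{l\in\mathcal{L}}w_l$. Then the modified Gini-entropy \[ G_t^m=\sum_{l\in\mathcal{L}}w_l\sum_{i=1}^k\sqrt{\pi_{l,i}(\mathcal{C}-\pi_{l,i})} \] satisfies $\sqrt{\mathcal{C}-1}\le G_t^m\le (t+1)\,w\sqrt{k\mathcal{C}-1}$. *)

From HB Require Import structures.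
From mathcomp Require Import all_boot all_order all_algebra.
From mathcomp Require Import reals.
Set Implicit Arguments. Unset Strict Implicit. Unset Printing Implicit Defensive.
Import Order.TTheory GRing.Theory Num.Theory.
Local Open Scope ring_scope.

(* Leaves of a binary tree with t internal nodes: 'I_(t+1); labels: 'I_k.
   w l     = probability that x reaches leaf l,
   pi l i  = probability that x has label i given it reaches l. *)

Definition modGini (R : realType) (t k : nat) (C : R)
  (w : 'I_t.+1 -> R) (pi : 'I_t.+1 -> 'I_k -> R) : R :=
  \sum_(l < t.+1) w l * \sum_(i < k) Num.sqrt (pi l i * (C - pi l i)).

Definition maxWeight (R : realType) (t : nat) (w : 'I_t.+1 -> R) : R :=
  \big[Num.max/0]_(l < t.+1) w l.

From HB Require Import structures.
From mathcomp Require Import all_boot all_order all_algebra.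
From mathcomp Require Import reals.
From mathcomp Require Import ring.
Import Order.TTheory GRing.Theory Num.Theory.
Local Open Scope ring_scope.

(* Both bounds hold leaf by leaf and are then averaged with the weights w_l.
   Lower bound: since p <= 1, each term sqrt(p (C - p)) dominates p sqrt(C - 1),
   and the p_i sum to 1.  Upper bound: by Cauchy-Schwarz the squared leaf sum is
   at most k sum_i p_i (C - p_i) = k C - k sum_i p_i^2, and again by
   Cauchy-Schwarz k sum_i p_i^2 >= (sum_i p_i)^2 = 1. *)

Definition leafGini {R : rcfType} {k : nat} (C : R) (p : 'I_k -> R) : R :=
  \sum_(i < k) Num.sqrt (p i * (C - p i)).

Lemma leafGini_ge0 {R : rcfType} {k : nat} (C : R) (p : 'I_k -> R) :
  0 <= leafGini C p.
Proof. by apply: sumr_ge0 => i _; exact: sqrtr_ge0. Qed.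

Lemma sqr_sum_le_card_sum_sqr {R : realFieldType} {n : nat} (a : 'I_n -> R) :
  (\sum_(i < n) a i) ^+ 2 <= n%:R * \sum_(i < n) a i ^+ 2.
Proof.
set S := \sum_(i < n) a i; set S2 := \sum_(i < n) a i ^+ 2.
have : 0 <= \sum_(i < n) \sum_(j < n) (a i - a j) ^+ 2.
  by do 2!apply: sumr_ge0 => ? _; exact: sqr_ge0.
have -> : \sum_(i < n) \sum_(j < n) (a i - a j) ^+ 2 =
    \sum_(i < n) (a i ^+ 2 *+ n + S2 - a i * S *+ 2).
  apply: eq_bigr => i _.
  rewrite (eq_bigr (fun j => a i ^+ 2 + a j ^+ 2 - (a i * a j) *+ 2)).
    by rewrite sumrB big_split /= sumr_const card_ord sumrMnl mulr_sumr.
  by move=> j _; ring.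
rewrite sumrB big_split /= sumrMnl sumr_const card_ord sumrMnl -mulr_suml -/S -/S2.
by rewrite -mulr2n -mulrnBl pmulrn_lge0 // subr_ge0 expr2 mulr_natl.
Qed.

Lemma gini_term_ge {R : rcfType} {C p : R} : 0 <= C -> 0 <= p <= 1 ->
  p * Num.sqrt (C - 1) <= Num.sqrt (p * (C - p)).
Proof.
move=> C_ge0 /andP[p_ge0 p_le1].
rewrite -[p in p * _]ger0_norm // -sqrtr_sqr -sqrtrM ?sqr_ge0 //.
apply: ler_wsqrtr.
rewrite -subr_ge0 (_ : _ - _ = p * (1 - p) * C); last by ring.
by rewrite !mulr_ge0 // subr_ge0.
Qed.

Section LeafBounds.
Variables (R : rcfType) (k : nat) (C : R) (p : 'I_k -> R).
Hypothesis p_bounded : forall i, 0 <= p i <= 1.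
Hypothesis p_sum1 : \sum_(i < k) p i = 1.

Lemma leafGini_ge : 0 <= C -> Num.sqrt (C - 1) <= leafGini C p.
Proof.
move=> C_ge0; apply: le_trans (ler_sum _ (fun i _ => gini_term_ge C_ge0 (p_bounded i))).
by rewrite -mulr_suml p_sum1 mul1r.
Qed.

Lemma leafGini_le : 1 <= C -> leafGini C p <= Num.sqrt (k%:R * C - 1).
Proof.
move=> C_ge1.
have term_ge0 i : 0 <= p i * (C - p i).
  have /andP[pi_ge0 pi_le1] := p_bounded i.
  by rewrite mulr_ge0 // subr_ge0 (le_trans pi_le1 C_ge1).
have sum_sqr_ge : 1 <= k%:R * \sum_(i < k) p i ^+ 2.
  by have := sqr_sum_le_card_sum_sqr p; rewrite p_sum1 expr1n.
have -> : leafGini C p = Num.sqrt (leafGini C p ^+ 2).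
  by rewrite sqrtr_sqr ger0_norm ?leafGini_ge0.
apply/ler_wsqrtr/(le_trans (sqr_sum_le_card_sum_sqr _)).
have -> : \sum_(i < k) Num.sqrt (p i * (C - p i)) ^+ 2 = C - \sum_(i < k) p i ^+ 2.
  rewrite (eq_bigr _ (fun i _ => sqr_sqrtr (term_ge0 i))).
  by rewrite -[C in RHS]mulr1 -p_sum1 mulr_sumr -sumrB; apply: eq_bigr => i _; ring.
by rewrite mulrBr lerB.
Qed.

End LeafBounds.

Theorem lemma7 (R : realType) (C : R) (t k : nat)
  (w : 'I_t.+1 -> R) (pi : 'I_t.+1 -> 'I_k -> R) :
  2 < C ->
  (forall l, 0 <= w l) ->
  \sum_(l < t.+1) w l = 1 ->
  (forall l i, 0 <= pi l i <= 1) ->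
  (forall l, 0 < w l -> \sum_(i < k) pi l i = 1) ->
  Num.sqrt (C - 1) <= modGini C w pi /\
  modGini C w pi <= (t.+1)%:R * maxWeight w * Num.sqrt (k%:R * C - 1).
Proof.
move=> C_gt2 w_ge0 w_sum1 pi_bounded pi_sum1.
have C_ge1 : 1 <= C by rewrite (le_trans _ (ltW C_gt2)) // ler1n.
have pi_distr l : w l != 0 -> \sum_(i < k) pi l i = 1.
  by move=> w_neq0; apply: pi_sum1; rewrite lt_def w_neq0 w_ge0.
have -> : modGini C w pi = \sum_(l < t.+1) w l * leafGini C (pi l) by [].
split.
  have -> : Num.sqrt (C - 1) = \sum_(l < t.+1) w l * Num.sqrt (C - 1).
    by rewrite -mulr_suml w_sum1 mul1r.
  apply: ler_sum => l _.
  have [->|w_neq0] := eqVneq (w l) 0; first by rewrite !mul0r.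
  by apply: ler_wpM2l => //; apply: leafGini_ge; rewrite ?pi_distr // (le_trans ler01).
have -> : (t.+1)%:R * maxWeight w * Num.sqrt (k%:R * C - 1) =
    \sum_(l < t.+1) maxWeight w * Num.sqrt (k%:R * C - 1).
  by rewrite sumr_const card_ord -mulrA mulr_natl.
apply: ler_sum => l _.
have w_max : w l <= maxWeight w by exact: le_bigmax.
have [->|w_neq0] := eqVneq (w l) 0.
  by rewrite mul0r mulr_ge0 ?sqrtr_ge0 // (le_trans (w_ge0 l)).
by apply: ler_pM; rewrite ?leafGini_ge0 ?leafGini_le ?pi_distr.
Qed.
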